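(* For every constant specification $\mathsf{CS}$ for $\mathsf{LPC}^+$ there exist formulas $\phi,\psi$ and a term $t$ such that $\models_{\mathsf{LPC}^+_{\mathsf{CS}}}\phi\equiv\psi$ but $\not\models_{\mathsf{LPC}^+_{\mathsf{CS}}} t{:}\phi\equiv t{:}\psi$. (Indeed one may take $\phi=p$, $\psi=p\wedge p$ and $t=x$ a justification variable.)
   Context: Language: countable sets $\mathsf{Const}$, $\mathsf{Var}$, $\mathsf{Prop}$; terms $t ::= c \mid x \mid t\cdot t \mid t+t \mid\ !t$; formulas $\phi ::= p \mid \neg\phi \mid \phi\wedge\phi \mid \phi\supset\phi \mid \phi>\phi \mid t{:}\phi$; $\mathsf{Tm},\mathsf{Fm}$ the sets of terms and formulas; $\phi\equiv\psi:=(\phi\supset\psi)\wedge(\psi\supset\phi)$. A constant specification $\mathsf{CS}$ is a set of formulas $c{:}\phi$ with $c\in\mathsf{Const}$ and $\phi$ an instance of the axiom schemes (A1) classical tautologies, (A2) $(\phi>(\psi\supset\chi))\supset((\phi>\psi)\supset(\phi>\chi))$, (A3) $\phi>\phi$, (A4) $(\phi>\psi)\supset(\phi\supset\psi)$, (A5) $(s{:}(\phi>\psi)\wedge t{:}\phi) > (s\cdot t){:}\psi$, (A6) $s{:}\phi > (s+t){:}\phi$, (A7) $t{:}\phi>(s+t){:}\phi$, (A8) $t{:}\phi>\phi$, (A9) $t{:}\phi > (!t){:}t{:}\phi$. A relational model is $\mathcal M=(W,W_N,R_{Fm},R_{Tm},V)$: $W$ a nonempty set, $W_N\subseteq W$ nonempty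 (normal states); $R_{Fm}$ assigns to each $\phi\in\mathsf{Fm}$ a relation $R_\phi\subseteq W_N\times W_N$; $R_{Tm}$ assigns to each $t\in\mathsf{Tm}$ a relation $R_t\subseteq W\times W$; $V$ assigns to each normal state $w$ a set $V(w)\subseteq\mathsf{Prop}$ and to each $w\in W\setminus W_N$ a set $V(w)\subseteq\mathsf{Fm}$. $R_\phi(w)$, $R_t(w)$ denote the sets of successors. Truth: at $w\in W\setminus W_N$, $\mathcal M,w\models\phi$ iff $\phi\in V(w)$; at $w\in W_N$: $p$ iff $p\in V(w)$; $\neg,\wedge,\supset$ classically; $\phi>\psi$ iff $R_\phi(w)\subseteq[\psi]$; $t{:}\phi$ iff $R_t(w)\subseteq[\phi]$, where $[\phi]=\{w\in W:\mathcal M,w\models\phi\}$. $\mathcal M$ is an $\mathsf{LPC}^+_{\mathsf{CS}}$-model if for all $w\in W_N$: (1) $R_\phi(w)\subseteq[\phi]$ for all $\phi$; (2) if $w\in[\phi]$ then $w\in R_\phi(w)$; (3) $R_c(w)\subseteq[\phi]$ for each $c{:}\phi\in\mathsf{CS}$; (4) $R_{s+t}(w)\subseteq R_s(w)\cap R_t(w)$; (5) for all $v\in R_{s\cdot t}(w)$ and all $\phi,\psi$: if $w\in[s{:}(\phi>\psi)\wedge t{:}\phi]$ then $v\in[\psi]$; (6) $wR_tw$ for all $t$; (7) for all $t$ and $v,u\in W$, if $wR_{!t}v$ and $vR_tu$ then $wR_tu$. $\models_{\mathsf{LPC}^+_{\mathsf{CS}}}\phi$ means $\phi$ is true at every normal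 state of every $\mathsf{LPC}^+_{\mathsf{CS}}$-model. *)

From Stdlib Require Import List.

Definition Const := nat.
Definition Var := nat.
Definition PVar := nat.

Inductive Tm : Type :=
| TConst : Const -> Tm
| TVar : Var -> Tm
| TApp : Tm -> Tm -> Tm
| TSum : Tm -> Tm -> Tm
| TBang : Tm -> Tm.

Inductive Fm : Type :=
| FAtom : PVar -> Fm
| FNeg : Fm -> Fm
| FAnd : Fm -> Fm -> Fm
| FImp : Fm -> Fm -> Fm
| FCond : Fm -> Fm -> Fm
| FJust : Tm -> Fm -> Fm.

Definition FEquiv (phi psi : Fm) : Fm := FAnd (FImp phi psi) (FImp psi phi).

(* Classical tautologies: formulas true under every Boolean valuation that
   treats atoms, conditionals and justification formulas as propositional
   atoms. *)
Fixpoint bool_eval (v : Fm -> bool) (f : Fm) : bool :=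
  match f with
  | FNeg a => negb (bool_eval v a)
  | FAnd a b => andb (bool_eval v a) (bool_eval v b)
  | FImp a b => orb (negb (bool_eval v a)) (bool_eval v b)
  | _ => v f
  end.

Definition Tautology (f : Fm) : Prop := forall v, bool_eval v f = true.

Inductive AxiomInst : Fm -> Prop :=
| A1 : forall f, Tautology f -> AxiomInst f
| A2 : forall a b c,
    AxiomInst (FImp (FCond a (FImp b c)) (FImp (FCond a b) (FCond a c)))
| A3 : forall a, AxiomInst (FCond a a)
| A4 : forall a b, AxiomInst (FImp (FCond a b) (FImp a b))
| A5 : forall s t a b,
    AxiomInst (FCond (FAnd (FJust s (FCond a b)) (FJust t a)) (FJust (TApp s t) b))
| A6 : forall s t a, AxiomInst (FCond (FJust s a) (FJust (TSum s t) a))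
| A7 : forall s t a, AxiomInst (FCond (FJust t a) (FJust (TSum s t) a))
| A8 : forall t a, AxiomInst (FCond (FJust t a) a)
| A9 : forall t a, AxiomInst (FCond (FJust t a) (FJust (TBang t) (FJust t a))).

Definition ConstSpec := Const -> Fm -> Prop.
Definition is_CS (CS : ConstSpec) : Prop :=
  forall c phi, CS c phi -> AxiomInst phi.

Record Model : Type := {
  W : Type;
  WN : W -> Prop;                       (* normal states *)
  WN_nonempty : exists w, WN w;
  RF : Fm -> W -> W -> Prop;            (* R_phi, only relevant on W_N x W_N *)
  RF_normal : forall phi w v, WN w -> RF phi w v -> WN w /\ WN v;
  RT : Tm -> W -> W -> Prop;
  VP : W -> PVar -> Prop;
  VF : W -> Fm -> Prop
}.

Fixpoint sat (M : Model) (w : W M) (f : Fm) : Prop :=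
  (~ WN M w -> VF M w f) /\
  (WN M w ->
   match f with
   | FAtom p => VP M w p
   | FNeg a => ~ sat M w a
   | FAnd a b => sat M w a /\ sat M w b
   | FImp a b => sat M w a -> sat M w b
   | FCond a b => forall v, RF M a w v -> sat M v b
   | FJust t a => forall v, RT M t w v -> sat M v a
   end).

Definition is_LPCplus_model (CS : ConstSpec) (M : Model) : Prop :=
  forall w, WN M w ->
  (forall phi v, RF M phi w v -> sat M v phi) /\
  (forall phi, sat M w phi -> RF M phi w w) /\
  (forall c phi, CS c phi -> forall v, RT M (TConst c) w v -> sat M v phi) /\
  (forall s t v, RT M (TSum s t) w v -> RT M s w v /\ RT M t w v) /\
  (forall s t v, RT M (TApp s t) w v -> forall phi psi,
      sat M w (FAnd (FJust s (FCond phi psi)) (FJust t phi)) -> sat M v psi) /\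
  (forall t, RT M t w w) /\
  (forall t v u, RT M (TBang t) w v -> RT M t v u -> RT M t w u).

Definition valid (CS : ConstSpec) (f : Fm) : Prop :=
  forall M : Model, is_LPCplus_model CS M -> forall w, WN M w -> sat M w f.

(** The equivalence [p ≡ p ∧ p] holds at every normal state of every model,
    because the Boolean connectives are evaluated truth-functionally there.
    Justification formulas, however, quantify over [R_t]-successors, which may
    be non-normal states, and a non-normal state may verify [p] without
    verifying [p ∧ p].  So take a normal state [true] and a non-normal state
    [false] verifying exactly [p0], let every term be reflexive and let the
    variables see [false] in addition: then [x:p0] holds at [true] while
    [x:(p0 ∧ p0)] fails.  This is an LPC⁺ model for every constant
    specification, since constants, sums, applications and bangs are only
    reflexive, and at [true] every axiom instance is classically true. *)
From Stdlib Require Import Setoid ClassicalEpsilon.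

Lemma sat_normal_iff (P A B : Prop) : P -> ((~ P -> A) /\ (P -> B)) <-> B.
Proof. tauto. Qed.

Lemma valid_equiv_and_idem (CS : ConstSpec) (phi : Fm) :
  valid CS (FEquiv phi (FAnd phi phi)).
Proof.
  intros M _ w Hw; simpl.
  rewrite !(sat_normal_iff _ _ _ Hw).
  tauto.
Qed.

Definition is_var (t : Tm) : Prop := match t with TVar _ => True | _ => False end.

(* Truth at the normal state of the counter-model; note [a > b] collapses to
   material implication, since [R_a] is the identity on [a]-states. *)
Fixpoint hyper_truth (f : Fm) : Prop :=
  match f with
  | FAtom _ => True
  | FNeg a => ~ hyper_truth a
  | FAnd a b => hyper_truth a /\ hyper_truth b
  | FImp a b => hyper_truth a -> hyper_truth b
  | FCond a b => hyper_truth a -> hyper_truth b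
  | FJust t a => hyper_truth a /\ (is_var t -> a = FAtom 0)
  end.

Definition hyper_RF (f : Fm) (w v : bool) : Prop := w = v /\ v = true /\ hyper_truth f.
Definition hyper_RT (t : Tm) (w v : bool) : Prop := w = v \/ is_var t.

Lemma hyper_WN_nonempty : exists w : bool, w = true.
Proof. exists true; reflexivity. Qed.

Lemma hyper_RF_normal (phi : Fm) (w v : bool) :
  w = true -> hyper_RF phi w v -> w = true /\ v = true.
Proof. now intros ? (_ & ? & _). Qed.

Definition hyper_model : Model :=
  {| W := bool; WN := fun w => w = true; WN_nonempty := hyper_WN_nonempty;
     RF := hyper_RF; RF_normal := hyper_RF_normal; RT := hyper_RT;
     VP := fun _ _ => True; VF := fun _ f => f = FAtom 0 |}.

Lemma sat_hyper_false (f : Fm) : sat hyper_model false f <-> f = FAtom 0.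
Proof. destruct f; simpl; intuition discriminate. Qed.

Lemma sat_hyper_true (f : Fm) : sat hyper_model true f <-> hyper_truth f.
Proof.
  induction f as [p | a IHa | a IHa b IHb | a IHa b IHb | a IHa b IHb | t a IHa];
    simpl; rewrite (sat_normal_iff _ _ _ (eq_refl true)); try tauto.
  - split.
    + intros H Ha; apply IHb, H; unfold hyper_RF; tauto.
    + intros H v (<- & _ & Ha); apply IHb, H, Ha.
  - split.
    + intros H; split.
      * apply IHa, H; left; reflexivity.
      * intros Hvar; apply sat_hyper_false, H; right; exact Hvar.
    + intros [Ha Hvar] [|] Hv.
      * apply IHa, Ha.
      * destruct Hv as [Hv | Hv]; [discriminate | apply sat_hyper_false, Hvar, Hv].
Qed.

Definition hyper_valuation (f : Fm) : bool :=
  if excluded_middle_informative (hyper_truth f) then true else false.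

Lemma bool_eval_hyper_valuation (f : Fm) :
  bool_eval hyper_valuation f = true <-> hyper_truth f.
Proof.
  assert (Hval : forall g, hyper_valuation g = true <-> hyper_truth g).
  { intro g; unfold hyper_valuation.
    destruct (excluded_middle_informative (hyper_truth g)); intuition discriminate. }
  induction f; simpl; try apply Hval;
    [rewrite <- IHf | rewrite <- IHf1, <- IHf2 | rewrite <- IHf1, <- IHf2];
    repeat match goal with |- context [bool_eval ?v ?g] => destruct (bool_eval v g) end;
    simpl; intuition discriminate.
Qed.

Lemma AxiomInst_hyper_truth (f : Fm) : AxiomInst f -> hyper_truth f.
Proof.
  destruct 1 as [f Htaut | | | | | | | |]; simpl; try tauto.
  apply bool_eval_hyper_valuation, Htaut.
Qed.

Lemma hyper_model_LPCplus (CS : ConstSpec) :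
  is_CS CS -> is_LPCplus_model CS hyper_model.
Proof.
  intros HCS w Hw; simpl in Hw; subst w.
  split; [| split; [| split; [| split; [| split; [| split]]]]].
  - intros phi v (<- & _ & H); apply sat_hyper_true, H.
  - intros phi H; apply sat_hyper_true in H; cbn; unfold hyper_RF; auto.
  - intros c phi Hc v [<- | []]; apply sat_hyper_true, AxiomInst_hyper_truth, (HCS c), Hc.
  - now intros s t v [<- | []]; split; left.
  - intros s t v [<- | []] phi psi H.
    apply sat_hyper_true in H; simpl in H.
    apply sat_hyper_true; tauto.
  - now left.
  - now intros t v u [<- | []].
Qed.

Lemma not_valid_var_just_and_idem (CS : ConstSpec) (x : Var) :
  is_CS CS ->
  ~ valid CS (FImp (FJust (TVar x) (FAtom 0)) (FJust (TVar x) (FAnd (FAtom 0) (FAtom 0)))).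
Proof.
  intros HCS Hvalid.
  specialize (Hvalid hyper_model (hyper_model_LPCplus CS HCS) true eq_refl).
  apply sat_hyper_true in Hvalid; simpl in Hvalid.
  now destruct Hvalid as [_ Hpp]; [split | discriminate Hpp].
Qed.

Theorem mainTheorem4 :
  forall CS : ConstSpec, is_CS CS ->
  exists (phi psi : Fm) (t : Tm),
    valid CS (FEquiv phi psi) /\ ~ valid CS (FEquiv (FJust t phi) (FJust t psi)).
Proof.
  intros CS HCS.
  exists (FAtom 0), (FAnd (FAtom 0) (FAtom 0)), (TVar 0).
  split; [apply valid_equiv_and_idem |].
  intros Hvalid; apply (not_valid_var_just_and_idem CS 0 HCS).
  intros M HM w Hw.
  now destruct (proj2 (Hvalid M HM w Hw) Hw).
Qed.
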